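(* Let $\mathtt{X}$ and $\mathtt{Y}$ be two operations in a run $r$ of a protocol $P$. If $\mathtt{Y}$ completes in $r$ and $\mathtt{X}\not\boldsymbol{\rightsquigarrow}_r\mathtt{Y}$, then there exists a run $r'\approx r$ in which both (i) $\mathtt{Y}<_{r'}\mathtt{X}$, and (ii) $\mathtt{X}<_{r'}\mathtt{Z}$ for every operation $\mathtt{Z}$ that completes in $r$ such that $\mathtt{X}<_r\mathtt{Z}$ and $\mathtt{Z}\not\boldsymbol{\rightsquigarrow}_r\mathtt{Y}$ (here operations of $r'$ are identified with their corresponding operations of $r$).
   Context: Model: $n$ processes connected by directed FIFO channels; an environment (adversary) schedules everything. Time is identified with the natural numbers; a run $r=r(0),r(1),\dots$ is an infinite sequence of global states, $r_i(m)$ denotes process $i$'s local state at time $m$, and round $m+1$ transforms $r(m)$ into $r(m+1)$. In each round the environment chooses independently for each process $i$ one of: $\mathtt{move}_i$ ($i$ performs an action allowed by its protocol at its current local state — a local action, a message send, or a response action), $\mathtt{skip}_i$, $\mathtt{invoke}_i(x)$ ($i$ receives external input $x$), or $\mathtt{deliver}_i$ of a message from some $j$ (delivered if it is the oldest message in transit on the channel from $j$ to $i$). The local state of a process consists of its initial value and the complete ordered history of its actions, messages sent and received, and inputs. A run of protocol $P$ starts in an initial global state and every process action is allowed by $P$ at the current local state. A node is a process-time pair $\langle p,t\rangle$. Message chains: $\langle p,t\rangle\rightsquigarrow_r\langle q,t'\rangle$ holds if (1a) $p=q$ and $t<t'$, or (1b) $p$ sends a message to $q$ in round $t+1$ of $r$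 delivered no later than round $t'$, or (2) transitively via some intermediate node. Runs are locally equivalent, $r\approx r'$, if every process passes through exactly the same set of local states in both. Operations: an operation $\mathtt{X}$ of process $i$ starts with an invocation input $\mathtt{invoke}_i(\cdot)$ in round $t$ and ends with a matching response action performed by $i$ in round $t'$; write $\mathtt{X}.s=\langle i,t\rangle$, $\mathtt{X}.e=\langle i,t'\rangle$, $t_{\mathtt{X}.s}(r)=t$, $t_{\mathtt{X}.e}(r)=t'$. $\mathtt{X}$ completes in $r$ if both invocation and response occur. $\mathtt{X}<_r\mathtt{Y}$ means $t_{\mathtt{X}.e}(r)<t_{\mathtt{Y}.s}(r)$. $\mathtt{X}\boldsymbol{\rightsquigarrow}_r\mathtt{Y}$ means $\mathtt{X}.s\rightsquigarrow_r\mathtt{Y}.e$. An operation $\mathtt{X}$ of $i$ in $r$ corresponds to an operation $\mathtt{X}'$ of $i$ in $r'$ if $r_i(t_{\mathtt{X}.s}(r))=r'_i(t_{\mathtt{X}'.s}(r'))$ and $r_i(t_{\mathtt{X}.e}(r))=r'_i(t_{\mathtt{X}'.e}(r'))$. *)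

From mathcomp Require Import all_boot.
Set Implicit Arguments.
Unset Strict Implicit.
Unset Printing Implicit Defensive.

Section Model.
Variables (n : nat)
          (V : Type)
          (A : Type)
          (M : Type)
          (Inp : Type)
          (Res : Type).

Inductive act : Type :=
| ALocal of A
| ASend of 'I_n & M
| AResp of Res.

Inductive ev : Type :=
| EAct of act
| EInv of Inp
| ERecv of 'I_n & M.

Definition lstate : Type := (V * seq ev)%type.
Definition addev (s : lstate) (e : ev) : lstate := (s.1, rcons s.2 e).

Record gstate : Type := GState {
  loc : 'I_n -> lstate;
  chan : 'I_n -> 'I_n -> seq M   (* chan j i : channel from j to i, oldest first *)
}.

Inductive envact : Type :=
| EnvMove
| EnvSkip
| EnvInvoke of Inp
| EnvDeliver of 'I_n.          (* deliver_i of the oldest message from j *)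

Definition protocol : Type := lstate -> act -> Prop.

Definition new_loc (g : gstate) (i : 'I_n) (e : envact) (a : act) : lstate :=
  match e with
  | EnvMove => addev (loc g i) (EAct a)
  | EnvSkip => loc g i
  | EnvInvoke x => addev (loc g i) (EInv x)
  | EnvDeliver j =>
      match chan g j i with
      | [::] => loc g i
      | m :: _ => addev (loc g i) (ERecv j m)
      end
  end.

Definition after_delivery (g : gstate) (j i : 'I_n) (e : envact) : seq M :=
  match e with
  | EnvDeliver k => if k == j then behead (chan g j i) else chan g j i
  | _ => chan g j i
  end.

Definition sent_to (e : envact) (a : act) (i : 'I_n) : seq M :=
  match e, a with
  | EnvMove, ASend k m => if k == i then [:: m] else [::]
  | _, _ => [::]
  end.

Definition round (P : protocol) (g g' : gstate) : Prop :=
  exists (env : 'I_n -> envact) (acts : 'I_n -> act),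
    (forall i, env i = EnvMove -> P (loc g i) (acts i)) /\
    (forall i, loc g' i = new_loc g i (env i) (acts i)) /\
    (forall j i, chan g' j i =
       after_delivery g j i (env i) ++ sent_to (env j) (acts j) i).

Definition initial (g : gstate) : Prop :=
  (forall i, (loc g i).2 = [::]) /\ (forall j i, chan g j i = [::]).

Definition run := nat -> gstate.

Definition is_run (P : protocol) (r : run) : Prop :=
  initial (r 0) /\ forall m, round P (r m) (r m.+1).

Definition lst (r : run) (i : 'I_n) (m : nat) : lstate := loc (r m) i.

Definition ev_at (r : run) (i : 'I_n) (t : nat) (e : ev) : Prop :=
  0 < t /\ lst r i t = addev (lst r i t.-1) e.

Definition is_send_to (q : 'I_n) (e : ev) : bool :=
  if e is EAct (ASend k _) then k == q else false.
Definition is_recv_from (p : 'I_n) (e : ev) : bool :=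
  if e is ERecv k _ then k == p else false.

(* p sends a message to q in round t+1 of r, delivered no later than round t'
   (FIFO: the k-th message sent on p->q is the k-th one received). *)
Definition msg_delivered (r : run) (p q : 'I_n) (t t' : nat) : Prop :=
  exists m, ev_at r p t.+1 (EAct (ASend q m)) /\
    count (is_send_to q) (lst r p t).2 < count (is_recv_from p) (lst r q t').2.

Definition node := ('I_n * nat)%type.

Inductive chain (r : run) : node -> node -> Prop :=
| chain_loc p t t' : t < t' -> chain r (p, t) (p, t')
| chain_msg p q t t' : msg_delivered r p q t t' -> chain r (p, t) (q, t')
| chain_trans a b c : chain r a b -> chain r b c -> chain r a c.

Definition loc_equiv (r r' : run) : Prop :=
  forall i s, (exists m, lst r i m = s) <-> (exists m, lst r' i m = s).

(* Operations: an operation of process i is identified by the round ts of its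
   invocation; it ends in round te with the matching (first subsequent)
   response action, with no other invocation/response of i in between. *)
Definition invoked_at (r : run) (i : 'I_n) (t : nat) : Prop :=
  exists x, ev_at r i t (EInv x).
Definition responds_at (r : run) (i : 'I_n) (t : nat) : Prop :=
  exists v, ev_at r i t (EAct (AResp v)).

Definition op_end (r : run) (i : 'I_n) (ts te : nat) : Prop :=
  invoked_at r i ts /\ ts < te /\ responds_at r i te /\
  (forall t, ts < t < te -> ~ invoked_at r i t /\ ~ responds_at r i t).

Definition completes (r : run) (i : 'I_n) (ts : nat) : Prop :=
  exists te, op_end r i ts te.

Definition corresponds (r r' : run) (i : 'I_n) (ts ts' : nat) : Prop :=
  invoked_at r i ts /\ invoked_at r' i ts' /\ lst r i ts = lst r' i ts' /\
  (forall te, op_end r i ts te ->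
     exists te', op_end r' i ts' te' /\ lst r i te = lst r' i te').

End Model.

(* Let [cut p] count the times [t] with <p,t> ~> Y.e, i.e. the rounds of [p] in the causal
   past of the end of Y.  This cut is consistent: if [q] received inside it a message that [p]
   sent outside it, the sending node would itself precede Y.e.  Hence the schedule in which
   every [p] first performs its first [cut p] rounds, and afterwards all remaining rounds of
   [r] are replayed in their original order delayed by [tye], is a run of the protocol in
   which every process passes through the same local states.  Y lies inside the cut, while
   X and every Z with Z not ~> Y start outside it (an invocation sends nothing, so its round
   is in the cut only if the invocation node itself precedes Y.e); so in the new run X starts
   after Y ends, and X and Z keep their order since both are delayed by the same amount. *)

From mathcomp Require Import all_boot zify.
From mathcomp Require Import boolp.
Set Implicit Arguments.
Unset Strict Implicit.
Unset Printing Implicit Defensive.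

Arguments EnvMove {n Inp}.
Arguments EnvSkip {n Inp}.
Arguments EnvDeliver {n Inp} _.
Arguments ASend {n A M Res} _ _.
Arguments EAct {n A M Inp Res} _.

Lemma exists_crossing (g : nat -> nat) a b k : a <= b -> g a <= k < g b ->
  exists2 s, a <= s < b & g s <= k < g s.+1.
Proof.
elim: b => [|b IH] ab /andP[ga gb].
  by move: ab ga; rewrite leqn0 => /eqP->; lia.
have [ba|{}ab] := ltnP b a.
  have ea : a = b.+1 by lia.
  by move: ga; rewrite ea; lia.
case: (leqP (g b) k) => gbk; first by exists b; lia.
by have [s] := IH ab (introT andP (conj ga gbk)); exists s; lia.
Qed.

Lemma drop_cat_le (T : Type) k (s t : seq T) :
  k <= size s -> drop k (s ++ t) = drop k s ++ t.
Proof.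
rewrite drop_cat leq_eqVlt => /orP[/eqP->|->//].
by rewrite ltnn subnn drop0 drop_size.
Qed.

Section Model.
Variables (n : nat) (V A M Inp Res : Type).
Notation ev := (ev n A M Inp Res).
Notation act := (act n A M Res).
Notation envact := (envact n Inp).
Notation gstate := (gstate n V A M Inp Res).
Notation run := (run n V A M Inp Res).
Implicit Types (P : protocol n V A M Inp Res) (g : gstate) (r : run).

Definition sent_payload (q : 'I_n) (e : ev) : option M :=
  if e is EAct (ASend k m) then (if k == q then Some m else None) else None.

Definition delivers_from (p : 'I_n) (e : envact) : bool :=
  if e is EnvDeliver k then k == p else false.

Lemma size_pmap_sent_payload q (h : seq ev) :
  size (pmap (sent_payload q) h) = count (is_send_to q) h.
Proof. by elim: h => [|[[a|k m|v]|x|k m] h IH] //=; case: (k == q); rewrite /= IH. Qed.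

Lemma after_deliveryE g q p e : after_delivery g q p e =
  if delivers_from q e then behead (chan g q p) else chan g q p.
Proof. by case: e => //= k; rewrite eq_sym. Qed.

Lemma new_loc_extends g p e (a : act) :
  exists s, (new_loc g p e a).2 = (loc g p).2 ++ s.
Proof.
case: e => [| |x|k] /=; last case: (chan g k p) => [|m _] /=;
  by [exists [::]; rewrite cats0 | eexists; rewrite -cats1].
Qed.

Record round_with P g g' (env : 'I_n -> envact) (acts : 'I_n -> act) : Prop := {
  rw_allowed : forall p, env p = EnvMove -> P (loc g p) (acts p);
  rw_loc : forall p, loc g' p = new_loc g p (env p) (acts p);
  rw_chan : forall q p, chan g' q p = after_delivery g q p (env p) ++ sent_to (env q) (acts q) p;
  rw_deliver : forall p q, env p = EnvDeliver q -> chan g q p <> [::]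
}.

(* A delivery from an empty channel has no effect, so it can be replaced by a skip. *)
Lemma round_with_exists P g g' : round P g g' -> exists env acts, round_with P g g' env acts.
Proof.
case=> env [acts [allowed [locE chanE]]].
pose env' p := if env p is EnvDeliver q then (if chan g q p is [::] then EnvSkip else env p) else env p.
have env'E p : env' p = env p \/ exists q, env p = EnvDeliver q /\ chan g q p = [::] /\ env' p = EnvSkip.
  rewrite /env'; case: (env p) => [| |x|q]; [by left..|].
  by case E: (chan g q p); [right; exists q|left].
exists env', acts; split=> [p|p|q p|p q].
- by case: (env'E p) => [->|[q [_ [_ ->]]]] //; apply: allowed.
- by rewrite locE; case: (env'E p) => [->|[q [-> [/= -> ->]]]].
- rewrite chanE; congr (_ ++ _).
    by case: (env'E p) => [->|[k [-> [/= E ->]]]] //; case: eqP => // <-; rewrite E.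
  by case: (env'E q) => [->|[k [-> [_ ->]]]].
- by rewrite /env'; case: (env p) => // k; case E: (chan g k p) => [|x s] // [<-]; rewrite E.
Qed.

Definition schedule P r (E : nat -> 'I_n -> envact) (Ac : nat -> 'I_n -> act) : Prop :=
  initial (r 0) /\ forall t, round_with P (r t) (r t.+1) (E t) (Ac t).

Lemma is_run_schedule P r : is_run P r -> exists E Ac, schedule P r E Ac.
Proof.
case=> init /(_ _)/round_with_exists rounds.
have /choice[EAc EAcP] : forall t, exists ea, round_with P (r t) (r t.+1) ea.1 ea.2.
  by move=> t; have [env [acts ?]] := rounds t; exists (env, acts).
by exists (fun t => (EAc t).1), (fun t => (EAc t).2).
Qed.

Lemma op_end_uniq r p ts te te' : op_end r p ts te -> op_end r p ts te' -> te = te'.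
Proof.
move=> [_ [lt_te [resp mid]]] [_ [lt_te' [resp' mid']]].
case: (ltngtP te te') => // lt.
- by have [|_ []] := mid' te; first lia.
- by have [|_ []] := mid te'; first lia.
Qed.

End Model.

Section Schedule.
Variables (n : nat) (V A M Inp Res : Type) (P : protocol n V A M Inp Res).
Variables (r : run n V A M Inp Res) (E : nat -> 'I_n -> envact n Inp)
  (Ac : nat -> 'I_n -> act n A M Res).
Hypothesis sched : schedule P r E Ac.

Definition nrecv (q p : 'I_n) t := count (is_recv_from p) (lst r q t).2.
Definition sent (p q : 'I_n) t := pmap (sent_payload q) (lst r p t).2.

Lemma size_sent p q t : size (sent p q t) = count (is_send_to q) (lst r p t).2.
Proof. exact: size_pmap_sent_payload. Qed.

Lemma hist_extends p t t' : t <= t' -> exists s, (lst r p t').2 = (lst r p t).2 ++ s.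
Proof.
apply: (homo_leq (f := fun t => (lst r p t).2) (r := fun h h' => exists s, h' = h ++ s)).
- by move=> h; exists [::]; rewrite cats0.
- by move=> h2 h1 h3 [s1 ->] [s2 ->]; exists (s1 ++ s2); rewrite catA.
- by move=> u; rewrite /lst (rw_loc (sched.2 u)); apply: new_loc_extends.
Qed.

Lemma size_hist_mono p : {homo (fun t => size (lst r p t).2) : t t' / t <= t'}.
Proof. by move=> t t' /(hist_extends p)[s ->]; rewrite size_cat leq_addr. Qed.

Lemma nrecv_mono q p : {homo nrecv q p : t t' / t <= t'}.
Proof. by move=> t t' /(hist_extends q)[s hs]; rewrite /nrecv hs count_cat leq_addr. Qed.

Lemma sent_extends p q t t' : t <= t' -> exists s, sent p q t' = sent p q t ++ s.
Proof. by move=> /(hist_extends p)[s hs]; rewrite /sent hs pmap_cat; eexists. Qed.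

Lemma size_sent_mono p q : {homo (fun t => size (sent p q t)) : t t' / t <= t'}.
Proof. by move=> t t' /(sent_extends p q)[s ->]; rewrite size_cat leq_addr. Qed.

Lemma nrecv_step q p t : nrecv q p t.+1 = nrecv q p t + delivers_from p (E t q).
Proof.
rewrite /nrecv /lst (rw_loc (sched.2 t)) /new_loc.
case Eq: (E t q) => [| |x|k] /=; last case: (chan (r t) k q) (rw_deliver (sched.2 t) Eq) => // m s _;
  by rewrite /addev /= -?cats1 ?count_cat /= ?addn0.
Qed.

Lemma sent_step p q t : sent p q t.+1 = sent p q t ++ sent_to (E t p) (Ac t p) q.
Proof.
rewrite /sent /lst (rw_loc (sched.2 t)) /new_loc.
case Ep: (E t p) => [| |x|k] /=; last case: (chan (r t) k p) (rw_deliver (sched.2 t) Ep) => // m s _.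
all: rewrite /addev /= -?cats1 ?pmap_cat ?cats0 //.
by case: (Ac t p) => [a|k m|v] //=; case: (k == q).
Qed.

Lemma chan_invariant t :
  (forall q p, chan (r t) q p = drop (nrecv p q t) (sent q p t)) /\
  (forall q p, nrecv p q t <= size (sent q p t)).
Proof.
elim: t => [|t [chanE le_sent]].
  by case: sched.1 => hist0 chan0; split=> q p; rewrite /nrecv /sent /lst !hist0 ?chan0.
have pending q p : delivers_from q (E t p) -> nrecv p q t < size (sent q p t).
  case Ep: (E t p) => [| |x|k] //= /eqP <-.
  by have := rw_deliver (sched.2 t) Ep; rewrite chanE ltnNge; apply: contra_notN => /drop_oversize.
split=> q p; rewrite nrecv_step sent_step.
- rewrite (rw_chan (sched.2 t)) after_deliveryE chanE.
  case dq: (delivers_from q (E t p)); last by rewrite addn0 drop_cat_le.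
  by rewrite -drop1 drop_drop add1n addn1 drop_cat_le // pending.
- case dq: (delivers_from q (E t p)); [have := pending q p dq | have := le_sent q p];
  rewrite size_cat; lia.
Qed.

Lemma chan_sent t q p : chan (r t) q p = drop (nrecv p q t) (sent q p t).
Proof. exact: (chan_invariant t).1. Qed.

Lemma nrecv_le_sent t q p : nrecv p q t <= size (sent q p t).
Proof. exact: (chan_invariant t).2. Qed.

Lemma nrecv_lt_sent t q p : chan (r t) q p <> [::] -> nrecv p q t < size (sent q p t).
Proof. by rewrite chan_sent ltnNge; apply: contra_notN => /drop_oversize. Qed.

Lemma sent_grows_send p q s : size (sent p q s) < size (sent p q s.+1) ->
  exists m, ev_at r p s.+1 (EAct (ASend q m)).
Proof.
rewrite sent_step size_cat; case Ep: (E s p) => [| |x|k] /=; try lia.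
case Ea: (Ac s p) => [a|k m|v] /=; try lia.
case: eqP => [<-|_] /=; last lia.
by exists m; split=> //; rewrite /lst (rw_loc (sched.2 s)) Ep Ea.
Qed.

Lemma nrecv_send q p t k m : ev_at r q t (EAct (ASend k m)) -> nrecv q p t = nrecv q p t.-1.
Proof. by move=> [_ e]; rewrite /nrecv e /addev /= -cats1 count_cat /= !addn0. Qed.

Lemma ev_at_inj p t e e' : ev_at r p t e -> ev_at r p t e' -> e = e'.
Proof. by move=> [_ h] [_]; rewrite h /addev => -[]; apply: rcons_injr. Qed.

Lemma ev_time_inj p u v e e' :
  ev_at r p u e -> ev_at r p v e' -> lst r p u = lst r p v -> u = v.
Proof.
wlog uv : u v e e' / u <= v.
  move=> W eu ev eq; case: (leqP u v) => uv; first exact: W eu ev eq.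
  by symmetry; apply: W ev eu (esym eq); lia.
move=> _ [v0 ev] eq; apply/eqP; rewrite eqn_leq uv leqNgt; apply/negP => lt.
have : u <= v.-1 by lia.
by move/(size_hist_mono p); rewrite eq ev size_rcons; lia.
Qed.

Lemma chain_time a b : chain r a b -> a.2 < b.2.
Proof.
elim=> //= [p q t t' [m [_]]|x y z _ xy _ yz]; last exact: ltn_trans xy yz.
rewrite -size_sent => lt; rewrite ltnNge; apply/negP => /(size_sent_mono p q) le.
by have := nrecv_le_sent t' p q; rewrite /nrecv; lia.
Qed.

Lemma chain_down p s t c : t <= s -> chain r (p, s) c -> chain r (p, t) c.
Proof.
rewrite leq_eqVlt => /orP[/eqP->//|lt] sc.
exact: chain_trans (chain_loc r p lt) sc.
Qed.

Lemma chain_nonsend p t c : chain r (p, t) c ->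
  (forall q m, ~ ev_at r p t.+1 (EAct (ASend q m))) ->
  chain r (p, t.+1) c \/ (p, t.+1) = c.
Proof.
move=> + nosend; move Ea: (p, t) => x xc.
elim: xc Ea => [p' t0 t' lt [-> ->]|p' q t0 t' [m [snd _]] [? ?]|u v w _ IH vw _ eu]; subst.
- by rewrite leq_eqVlt in lt; case/orP: lt => [/eqP->|lt]; [right|left; apply: chain_loc].
- by case: (nosend q m).
- by case: (IH erefl) => [uv|->]; left=> //; apply: chain_trans uv vw.
Qed.


Section Reschedule.
Variables (c : 'I_n -> nat) (T : nat).
Hypothesis c_le : forall p, c p <= T.
Hypothesis c_consistent : forall p q, nrecv q p (c q) <= size (sent p q (c p)).

(* In [resched], process [p] is at time [m] in the state it had at time [clock p m] in [r]:
   during the first [T] rounds every [p] runs its first [c p] rounds, and afterwards the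
   remaining rounds of [r] are replayed with delay [T].  Conversely, [p] reaches its state
   of time [u] in [r] at time [retime p u] in [resched]. *)
Definition clock p m := maxn (minn m (c p)) (m - T).
Definition retime p u := if u <= c p then u else T + u.

Definition resched : run n V A M Inp Res := fun m =>
  GState (fun p => lst r p (clock p m))
         (fun q p => drop (nrecv p q (clock p m)) (sent q p (clock q m))).

Definition resched_env m p := if clock p m.+1 == clock p m then EnvSkip else E (clock p m) p.
Definition resched_act m p := Ac (clock p m) p.

Lemma lst_resched p m : lst resched p m = lst r p (clock p m).
Proof. by []. Qed.

Lemma clock0 p : clock p 0 = 0.
Proof. by rewrite /clock; lia. Qed.

Lemma clock_step p m : clock p m.+1 = clock p m \/ clock p m.+1 = (clock p m).+1.
Proof. by have := c_le p; rewrite /clock; lia. Qed.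

Lemma clock_sync p q m : clock p m.+1 = (clock p m).+1 -> clock q m.+1 = (clock q m).+1 ->
  clock p m = clock q m.
Proof. by have := c_le p; have := c_le q; rewrite /clock; lia. Qed.

Lemma clock_retime p u : clock p (retime p u) = u.
Proof. by have := c_le p; rewrite /clock /retime; case: (leqP u (c p)); lia. Qed.

Lemma clock_retime_pred p u : clock p (retime p u).-1 = u.-1.
Proof. by have := c_le p; rewrite /clock /retime; case: (leqP u (c p)); lia. Qed.

Lemma retime_clock p m : clock p m.+1 = (clock p m).+1 -> retime p (clock p m.+1) = m.+1.
Proof. by have := c_le p; rewrite /retime; case: (leqP (clock p m.+1) (c p)); rewrite /clock; lia. Qed.

Lemma retime_mono p : {mono retime p : u v / u < v}.
Proof.
by move=> u v; have := c_le p; rewrite /retime; case: (leqP u (c p)); case: (leqP v (c p)); lia.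
Qed.

Lemma retime_le p u : retime p u <= T + u.
Proof. by rewrite /retime; case: (leqP u (c p)); lia. Qed.

Lemma resched_consistent m p q : nrecv q p (clock q m) <= size (sent p q (clock p m)).
Proof.
case: (leqP (clock q m) (clock p m)) => [le|lt].
  exact: leq_trans (nrecv_le_sent _ _ _) (size_sent_mono p q le).
have [le_q le_p] : clock q m <= c q /\ c p <= clock p m.
  by move: lt; have := c_le p; have := c_le q; rewrite /clock; lia.
apply: leq_trans (nrecv_mono q p le_q) _.
exact: leq_trans (c_consistent p q) (size_sent_mono p q le_p).
Qed.

Lemma nth_sent x0 p q t t' i : i < size (sent p q t) -> i < size (sent p q t') ->
  nth x0 (sent p q t) i = nth x0 (sent p q t') i.
Proof.
wlog le : t t' / t <= t'.
  by move=> W lt lt'; case: (leqP t t') => h; [exact: W | symmetry; apply: W => //; lia].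
by move=> lt _; have [s ->] := sent_extends p q le; rewrite nth_cat lt.
Qed.

Lemma resched_pending m p q : delivers_from q (resched_env m p) ->
  nrecv p q (clock p m) < size (sent q p (clock q m)).
Proof.
rewrite /resched_env; case: (clock_step p m) => [->|stp]; first by rewrite eqxx.
rewrite stp (gtn_eqF (ltnSn _)); case Ep: (E (clock p m) p) => [| |x|k] //= /eqP ek; subst k.
have := resched_consistent m.+1 q p; rewrite stp nrecv_step Ep /= eqxx addn1.
case: (clock_step q m) => [->//|stq _].
by rewrite -(clock_sync stp stq); apply: nrecv_lt_sent (rw_deliver (sched.2 _) Ep).
Qed.

Lemma resched_loc_step m p :
  loc (resched m.+1) p = new_loc (resched m) p (resched_env m p) (resched_act m p).
Proof.
have pend := @resched_pending m p; rewrite -[LHS]/(lst r p (clock p m.+1)).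
rewrite /resched_env /resched_act in pend *; case: (clock_step p m) => [->|stp].
  by rewrite eqxx.
rewrite stp (gtn_eqF (ltnSn _)) in pend *; rewrite /lst (rw_loc (sched.2 _)).
case Ep: (E (clock p m) p) => [| |x|k] //=.
have ne := rw_deliver (sched.2 _) Ep; have lt := nrecv_lt_sent ne.
have lt' : nrecv p k (clock p m) < size (sent k p (clock k m)) by apply: pend; rewrite Ep /=.
have [x0 _] : exists x0 : M, True by case: (chan _ k p) ne => // x0.
by rewrite chan_sent (drop_nth x0 lt) (drop_nth x0 lt') (nth_sent x0 lt lt').
Qed.

Lemma resched_chan_step m q p : chan (resched m.+1) q p =
  after_delivery (resched m) q p (resched_env m p) ++ sent_to (resched_env m q) (resched_act m q) p.
Proof.
have sentE : sent q p (clock q m.+1) =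
    sent q p (clock q m) ++ sent_to (resched_env m q) (resched_act m q) p.
  rewrite /resched_env /resched_act; case: (clock_step q m) => [->|stq].
    by rewrite eqxx cats0.
  by rewrite stq (gtn_eqF (ltnSn _)) sent_step.
have nrecvE : nrecv p q (clock p m.+1) =
    nrecv p q (clock p m) + delivers_from q (resched_env m p).
  rewrite /resched_env; case: (clock_step p m) => [->|stp]; first by rewrite eqxx addn0.
  by rewrite stp (gtn_eqF (ltnSn _)) nrecv_step.
rewrite /= after_deliveryE /= sentE nrecvE.
case dq: (delivers_from q (resched_env m p)).
- by rewrite -drop1 drop_drop add1n addn1 drop_cat_le // resched_pending.
- by rewrite addn0 drop_cat_le // resched_consistent.
Qed.

Lemma resched_run : is_run P resched.
Proof.
split=> [|m].
  case: sched.1 => hist0 _; split=> [p|q p] /=; rewrite !clock0; first exact: hist0.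
  by rewrite /sent /lst hist0.
exists (resched_env m), (resched_act m); split; [|split].
- by move=> p; rewrite /resched_env; case: eqP => // _ /(rw_allowed (sched.2 _)).
- exact: resched_loc_step.
- exact: resched_chan_step.
Qed.

Lemma ev_at_retime p u e : ev_at r p u e -> ev_at resched p (retime p u) e.
Proof.
case=> u0 eu; split; first by rewrite /retime; case: ifP; lia.
by rewrite !lst_resched clock_retime clock_retime_pred.
Qed.

Lemma ev_at_resched p m e :
  ev_at resched p m e -> ev_at r p (clock p m) e /\ retime p (clock p m) = m.
Proof.
case: m => [[//]|m] [_]; rewrite !lst_resched /= => em.
have stp : clock p m.+1 = (clock p m).+1.
  case: (clock_step p m) => // same; move: em; rewrite same => /(congr1 (fun s => size s.2)).
  by rewrite /= size_rcons; lia.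
by split; [split; [rewrite stp | rewrite stp in em *] | exact: retime_clock].
Qed.

Lemma op_end_retime p ts te : op_end r p ts te -> op_end resched p (retime p ts) (retime p te).
Proof.
case=> [[x ex] [lt [[v ev] quiet]]]; split; [|split; [|split]].
- by exists x; apply: ev_at_retime.
- by rewrite retime_mono.
- by exists v; apply: ev_at_retime.
- move=> t /andP[tst tte].
  have between e : ev_at resched p t e -> ev_at r p (clock p t) e /\ ts < clock p t < te.
    move=> /ev_at_resched[eu ret]; split=> //.
    by rewrite -[ts < _](retime_mono p) -[_ < te](retime_mono p) ret tst tte.
  split=> [[y /between[ey bt]]|[y /between[ey bt]]]; have [ninv nresp] := quiet _ bt.
  + by apply: ninv; exists y.
  + by apply: nresp; exists y.
Qed.

Lemma corresponds_retime p ts : invoked_at r p ts -> corresponds r resched p ts (retime p ts).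
Proof.
move=> [x ex]; split; [by exists x | split; [by exists x; apply: ev_at_retime | split]].
- by rewrite lst_resched clock_retime.
- move=> te ote; exists (retime p te); split; first exact: op_end_retime.
  by rewrite lst_resched clock_retime.
Qed.

Lemma corresponds_resched p ts ts' : corresponds r resched p ts ts' -> ts' = retime p ts.
Proof.
move=> [[x ex] [[y /ev_at_resched[ey ret]] [eq _]]].
by rewrite -ret -(ev_time_inj ex ey) // eq lst_resched.
Qed.

Lemma loc_equiv_resched : loc_equiv r resched.
Proof.
move=> p s; split=> [[m <-]|[m <-]]; last by exists (clock p m).
by exists (retime p m); rewrite lst_resched clock_retime.
Qed.

End Reschedule.

Section PastCut.
Variables (j : 'I_n) (tye : nat).
Hypothesis resp : responds_at r j tye.

Lemma not_past_end p : exists t, ~~ `[< chain r (p, t) (j, tye) >].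
Proof. by exists tye; apply/asboolPn => /chain_time /=; rewrite ltnn. Qed.

Definition cut p := ex_minn (not_past_end p).

Lemma past_cut p t : chain r (p, t) (j, tye) <-> t < cut p.
Proof.
rewrite /cut; case: ex_minnP => c /asboolPn npast minc; split=> [pt|lt].
- by rewrite ltnNge; apply/negP => le; apply: npast (chain_down le pt).
- by have [//|/asboolPn/minc] := asboolP (chain r (p, t) (j, tye)); lia.
Qed.

Lemma cut_le p : cut p <= tye.
Proof. by rewrite leqNgt; apply/negP => /past_cut/chain_time; rewrite ltnn. Qed.

Lemma cut_responder : cut j = tye.
Proof.
have [v [tye0 _]] := resp.
have /past_cut : chain r (j, tye.-1) (j, tye) by apply: chain_loc; lia.
by have := cut_le j; lia.
Qed.

Lemma past_receipts q p : 0 < cut q -> exists t',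
  (chain r (q, t') (j, tye) \/ (q, t') = (j, tye)) /\ nrecv q p t' = nrecv q p (cut q).
Proof.
move=> cq; have /past_cut prev : (cut q).-1 < cut q by lia.
have [[k [m snd]]|nosend] := EM (exists k m, ev_at r q (cut q) (EAct (ASend k m))).
  by exists (cut q).-1; split; [left | rewrite (nrecv_send p snd)].
have nosend' k m : ~ ev_at r q (cut q).-1.+1 (EAct (ASend k m)).
  by rewrite prednK // => snd; apply: nosend; exists k, m.
by exists (cut q); split=> //; move: (chain_nonsend prev nosend'); rewrite prednK.
Qed.

Lemma cut_consistent p q : nrecv q p (cut q) <= size (sent p q (cut p)).
Proof.
rewrite leqNgt; apply/negP => over.
have cq : 0 < cut q.
  by move: over; case: posnP => // ->; rewrite /nrecv /lst sched.1.1.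
have le_pq : cut p <= cut q.
  rewrite leqNgt; apply/negP => /ltnW/(size_sent_mono p q).
  by have := nrecv_le_sent (cut q) p q; lia.
have [s /andP[ps sq] /andP[ks ks1]] := exists_crossing (g := fun t => size (sent p q t)) le_pq
  (introT andP (conj (leqnn _) (leq_trans over (nrecv_le_sent _ _ _)))).
(* the message sent by [p] in round [s.+1 > cut p] is received in the past of Y.e *)
have [m snd] := sent_grows_send (leq_ltn_trans ks ks1).
have [t' [past_t' rq]] := past_receipts p cq.
have dlv : msg_delivered r p q s t'.
  by exists m; split=> //; rewrite -size_sent; rewrite /nrecv in rq over; lia.
have /past_cut : chain r (p, s) (j, tye).
  by case: past_t' => [|<-]; [apply: chain_trans; apply: chain_msg dlv | apply: chain_msg dlv].
by lia.
Qed.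

Lemma cut_lt_invocation p t :
  invoked_at r p t -> ~ chain r (p, t) (j, tye) -> cut p < t.
Proof.
move=> [x inv] npast; have t0 : 0 < t by case: inv.
have : cut p <= t by rewrite leqNgt; apply/negP => /past_cut.
rewrite leq_eqVlt => /orP[/eqP ct|//]; exfalso.
have /past_cut prev : t.-1 < cut p by lia.
have nosend k m : ~ ev_at r p t.-1.+1 (EAct (ASend k m)).
  by rewrite prednK // => /(ev_at_inj inv).
case: (chain_nonsend prev nosend); rewrite prednK // => -[ep et].
have [v resp'] := resp; rewrite -ep -et in resp'.
by have := ev_at_inj inv resp'.
Qed.

End PastCut.
End Schedule.

Theorem theorem9 (n : nat) (V A M Inp Res : Type)
    (P : protocol n V A M Inp Res) (r : run n V A M Inp Res)
    (i : 'I_n) (tx : nat)      (* operation X = (i, tx) *)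
    (j : 'I_n) (ty tye : nat)  (* operation Y = (j, ty), ending at tye *) :
  is_run P r ->
  invoked_at r i tx ->
  op_end r j ty tye ->
  ~ chain r (i, tx) (j, tye) ->
  exists r' : run n V A M Inp Res,
    is_run P r' /\ loc_equiv r r' /\
    (* (i) Y <_{r'} X *)
    (exists tx', corresponds r r' i tx tx') /\
    (exists ty', corresponds r r' j ty ty') /\
    (forall tx' ty' tye', corresponds r r' i tx tx' -> corresponds r r' j ty ty' ->
        op_end r' j ty' tye' -> tye' < tx') /\
    (* (ii) X <_{r'} Z for every Z completing in r with X <_r Z and Z not ~> Y *)
    (forall (k : 'I_n) (tz tze txe : nat),
        op_end r k tz tze -> op_end r i tx txe -> txe < tz ->
        ~ chain r (k, tz) (j, tye) ->
        (exists tz', corresponds r r' k tz tz') /\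
        (forall tx' txe' tz', corresponds r r' i tx tx' -> op_end r' i tx' txe' ->
            corresponds r r' k tz tz' -> txe' < tz')).
Proof.
move=> run_r inv_x end_y x_y.
have [E [Ac sched]] := is_run_schedule run_r.
have resp_y : responds_at r j tye by case: end_y => _ [_ []].
move: (cut_le sched j tye) (cut_consistent sched j tye) (cut_responder sched resp_y)
  (cut_lt_invocation sched resp_y); move: (cut sched j tye) => c c_le c_cons c_j c_lt.
have late p t : invoked_at r p t -> ~ chain r (p, t) (j, tye) -> retime c tye p t = tye + t.
  by move=> inv npast; rewrite /retime leqNgt c_lt.
have early t : t <= tye -> retime c tye j t = t by move=> le; rewrite /retime c_j le.
have corr := corresponds_resched sched c_le.
exists (resched r c tye); split; first exact: (resched_run sched c_le c_cons).
split; first exact: loc_equiv_resched.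
split; first by exists (retime c tye i tx); exact: (corresponds_retime c_le inv_x).
split; first by case: end_y => inv_y _; exists (retime c tye j ty); apply: corresponds_retime.
split.
- move=> tx' ty' tye' /corr -> /corr -> /(op_end_uniq (op_end_retime c_le end_y)) <-.
  by case: (inv_x) => x [tx0 _]; rewrite early // late //; lia.
- move=> k tz tze txe end_z end_x lt_xz z_y; have [inv_z _] := end_z.
  split; first by exists (retime c tye k tz); apply: corresponds_retime.
  move=> tx' txe' tz' /corr -> /(op_end_uniq (op_end_retime c_le end_x)) <- /corr ->.
  by rewrite (late _ _ inv_z z_y); have := retime_le c tye i txe; lia.
Qed.
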